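(* Let $R$ be a commutative ring with identity whose set of zero-divisors $Z_R$ contains a nonzero element, $n>1$, $S=M_n(R)$, and let $d$ denote distance in the orthogonality graph $O(S)$. (1) For every vertex $A$ of $O(S)$ there exists $b\in Z_R\setminus\{0\}$ with $d(A,bE)\le 2$ (and $bE$ is a vertex of $O(S)$). (2) If $A_1,A_2$ are vertices of $O(S)$ with $\operatorname{Ann}(\det A_1)\cap\operatorname{Ann}(\det A_2)\ne0$, then $d(A_1,A_2)\le 4$.
   Context: The orthogonality graph $O(S)$ of a ring $S$ is the undirected graph whose vertices are the nonzero two-sided zero-divisors of $S$, distinct vertices $x,y$ being adjacent iff $xy=yx=0$; $d$ is the graph distance. $Z_R$ is the set of zero-divisors of $R$ (including $0$), $\operatorname{Ann}(a)=\{x\in R:ax=0\}$, $E$ is the identity matrix. *)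

From HB Require Import structures.
From mathcomp Require Import all_boot all_order all_algebra.
Set Implicit Arguments. Unset Strict Implicit. Unset Printing Implicit Defensive.
Import GRing.Theory.
Local Open Scope ring_scope.

Definition zero_divisor (R : comNzRingType) (b : R) : Prop :=
  exists c : R, c != 0 /\ b * c = 0.

Definition overtex (R : comNzRingType) (n : nat) (X : 'M[R]_n) : Prop :=
  X != 0 /\ (exists Y : 'M[R]_n, Y != 0 /\ X *m Y = 0)
         /\ (exists Z : 'M[R]_n, Z != 0 /\ Z *m X = 0).

Definition oadj (R : comNzRingType) (n : nat) (X Y : 'M[R]_n) : Prop :=
  overtex X /\ overtex Y /\ X != Y /\ X *m Y = 0 /\ Y *m X = 0.

Fixpoint owalk_le (R : comNzRingType) (n : nat) (k : nat) (X Y : 'M[R]_n) : Prop :=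
  match k with
  | 0%N => X = Y
  | k'.+1 => X = Y \/ exists Z : 'M[R]_n, oadj X Z /\ owalk_le k' Z Y
  end.

Definition odist_le (R : comNzRingType) (n : nat) (k : nat) (X Y : 'M[R]_n) : Prop :=
  overtex X /\ overtex Y /\ owalk_le k X Y.

From HB Require Import structures.
From mathcomp Require Import all_boot all_order all_algebra ring.
From Stdlib Require Import Classical.
Import GRing.Theory.
Local Open Scope ring_scope.

(* The heart of the argument is a two-sided version of McCoy's theorem:
   if 0 <> x in R kills \det A, then some nonzero matrix C satisfies
   A C = C A = 0, and C is a multiple of x, so every b with b x = 0 also
   kills C.  It is proved by induction on the size k of the
   minors killed by x: if x kills every k x k minor but not some
   (k-1) x (k-1) minor, border that minor to a k x k submatrix M with rows
   f and columns g; then C = x * (columns g) adj(M) (rows f) works, since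
   by Cramer's rule the entries of A C and C A are x times k x k minors.

   Given the vertex A, choose y <> 0 killing \det A together with b <> 0
   with b y = 0 (possible since R has a nonzero zero-divisor).  Then bE is
   a vertex and A - C - bE (or A - bE directly) is a walk of length at
   most 2.  For part (2) a common annihilator of both determinants gives
   walks A1 - bE - A2 of total length at most 4. *)

Section Selection.
Context {R : comNzRingType} {n : nat}.

Lemma mxsub_selection k (f g : 'I_k -> 'I_n) (A : 'M[R]_n) :
  mxsub f g A = rowsub f 1%:M *m A *m colsub g 1%:M.
Proof. by rewrite mulmx_colsub mul_rowsub_mx mul1mx mulmx1 -mxsubcr. Qed.

Lemma mxsub_inj_id k (g : 'I_k -> 'I_n) :
  injective g -> mxsub g g (1%:M : 'M[R]_n) = 1%:M.
Proof.
move=> g_inj; apply/matrixP => i j; rewrite !mxE.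
by rewrite (inj_eq g_inj).
Qed.

Lemma mxsubZ k (f g : 'I_k -> 'I_n) (a : R) (B : 'M[R]_n) :
  mxsub f g (a *: B) = a *: mxsub f g B.
Proof. by apply/matrixP => i j; rewrite !mxE. Qed.

Lemma minor_rows_inj {k} {f g : 'I_k -> 'I_n} {A : 'M[R]_n} :
  \det (mxsub f g A) != 0 -> injective f.
Proof.
move=> h i1 i2 e; apply/eqP; apply: contraNT h => ne; apply/eqP.
by apply: (determinant_alternate ne) => j; rewrite !mxE e.
Qed.

Lemma minor_cols_inj {k} {f g : 'I_k -> 'I_n} {A : 'M[R]_n} :
  \det (mxsub f g A) != 0 -> injective g.
Proof.
move=> h; apply: (@minor_rows_inj k g f A^T).
by rewrite -trmx_mxsub det_tr.
Qed.

End Selection.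

Lemma exists_not_in_codom {n m} (f : 'I_m -> 'I_n) :
  (m < n)%N -> exists r, forall i, f i != r.
Proof.
move=> lt_mn; have : ~~ ([set: 'I_n] \subset codom f).
  apply: contraL lt_mn => /subset_leq_card; rewrite cardsT card_ord -leqNgt.
  have le_codom : (#|codom f| <= m)%N.
    by apply: leq_trans (card_size _) _; rewrite size_codom card_ord.
  by move=> le_n_codom; exact: leq_trans le_n_codom le_codom.
case/subsetPn => r _ r_out; exists r => i.
by apply: contraNneq r_out => <-; exact: codom_f.
Qed.

Definition replace_at {n k} (f : 'I_k -> 'I_n) (l : 'I_k) (r : 'I_n) :=
  fun j => if j == l then r else f j.

Definition extend {n m} (f : 'I_m -> 'I_n) (r : 'I_n) : 'I_m.+1 -> 'I_n :=
  fun i => if unlift ord_max i is Some j then f j else r.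

Lemma extend_lift {n m} (f : 'I_m -> 'I_n) r j : extend f r (lift ord_max j) = f j.
Proof. by rewrite /extend liftK. Qed.

Lemma extend_inj {n m} {f : 'I_m -> 'I_n} {r} :
  injective f -> (forall i, f i != r) -> injective (extend f r).
Proof.
move=> f_inj r_out i1 i2; rewrite /extend.
case: unliftP => [j1 ->|->]; case: unliftP => [j2 ->|->] // e.
- by rewrite (f_inj _ _ e).
- by move: (r_out j1); rewrite e eqxx.
- by move: (r_out j2); rewrite e eqxx.
Qed.

Section Cramer.
Context {R : comNzRingType} {n k : nat} (A : 'M[R]_n) (f g : 'I_k -> 'I_n).
Let M := mxsub f g A.

Lemma colsub_mul_adj r l :
  (colsub g A *m \adj M) r l = \det (mxsub (replace_at f l r) g A).
Proof.
rewrite mxE (expand_det_row _ l); apply: eq_bigr => i _.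
rewrite !mxE /replace_at eqxx; congr (_ * (_ * \det _)).
by apply/matrixP => a b; rewrite !mxE /replace_at eq_sym (negbTE (neq_lift l a)).
Qed.

Lemma adj_mul_rowsub l c :
  (\adj M *m rowsub f A) l c = \det (mxsub f (replace_at g l c) A).
Proof.
rewrite mxE (expand_det_col _ l); apply: eq_bigr => j _.
rewrite !mxE /replace_at eqxx mulrC; congr (_ * (_ * \det _)).
by apply/matrixP => a b; rewrite !mxE /replace_at eq_sym (negbTE (neq_lift l b)).
Qed.

End Cramer.

(* x annihilates every k x k minor of A (rows and columns taken with
   repetitions, which only adds vanishing minors). *)
Definition kills_minors {R : comNzRingType} {n} (A : 'M[R]_n) k (x : R) :=
  forall f g : 'I_k -> 'I_n, x * \det (mxsub f g A) = 0.

Lemma kills_minors_det {R : comNzRingType} {n} {A : 'M[R]_n} {x} :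
  \det A * x = 0 -> kills_minors A n x.
Proof.
move=> detAx f g; rewrite mxsub_selection !det_mulmx.
transitivity ((\det A * x) * (\det (rowsub f 1%:M) * \det (colsub g 1%:M)));
  [ring | by rewrite detAx mul0r].
Qed.

Section McCoy.
Context {R : comNzRingType} {n : nat} (A : 'M[R]_n).

Definition x_annihilator (x : R) (C : 'M[R]_n) :=
  [/\ C != 0, A *m C = 0, C *m A = 0 & forall b, b * x = 0 -> b *: C = 0].

(* Inductive step: x kills all (m+1)-minors but not the m-minor on rows f0
   and columns g0; bordering that minor yields the annihilator. *)
Lemma bordered_minor_annihilator m (f0 g0 : 'I_m -> 'I_n) x :
  (m < n)%N -> x * \det (mxsub f0 g0 A) != 0 -> kills_minors A m.+1 x ->
  exists C, x_annihilator x C.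
Proof.
move=> lt_mn x_minor kills.
have minor_neq0 : \det (mxsub f0 g0 A) != 0.
  by apply: contraNneq x_minor => ->; rewrite mulr0.
have [r r_out] := exists_not_in_codom f0 lt_mn.
have [c c_out] := exists_not_in_codom g0 lt_mn.
pose f := extend f0 r; pose g := extend g0 c.
have f_inj : injective f := extend_inj (minor_rows_inj minor_neq0) r_out.
have g_inj : injective g := extend_inj (minor_cols_inj minor_neq0) c_out.
pose M := mxsub f g A.
exists (x *: (colsub g 1%:M *m \adj M *m rowsub f 1%:M)); split.
- have sub_C : mxsub g f (colsub g 1%:M *m \adj M *m rowsub f 1%:M) = \adj M.
    rewrite !mxsub_mul -mxsubrc -mxsubcr mxsub_id.
    by rewrite !mxsub_inj_id // mul1mx mulmx1.
  have corner : row' ord_max (col' ord_max M) = mxsub f0 g0 A.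
    by apply/matrixP => a b; rewrite !mxE /f /g !extend_lift.
  apply: contraNneq x_minor => /(congr1 (mxsub g f)).
  rewrite mxsubZ sub_C => /matrixP /(_ ord_max ord_max).
  rewrite !mxE /cofactor corner mulrCA; set s := (-1) ^+ _.
  by move=> /(congr1 ( *%R s)); rewrite signrMK mulr0 => ->.
- have kill_rows : x *: (colsub g A *m \adj M) = 0.
    by apply/matrixP => a l; rewrite [LHS]mxE colsub_mul_adj kills mxE.
  rewrite -scalemxAr !mulmxA mulmx_colsub mulmx1 scalemxAl.
  by rewrite kill_rows mul0mx.
- have kill_cols : x *: (\adj M *m rowsub f A) = 0.
    by apply/matrixP => l a; rewrite [LHS]mxE adj_mul_rowsub kills mxE.
  rewrite -scalemxAl -!mulmxA mul_rowsub_mx mul1mx scalemxAr.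
  by rewrite kill_cols mulmx0.
- by move=> b bx; rewrite scalerA bx scale0r.
Qed.

Lemma kills_minors_annihilator {k x} :
  (k <= n)%N -> x != 0 -> kills_minors A k x -> exists C, x_annihilator x C.
Proof.
elim: k x => [|m IH] x le_kn x_neq0 kills.
  have := kills (widen_ord (leq0n n)) (widen_ord (leq0n n)).
  by rewrite det_mx00 mulr1 => x_eq0; rewrite x_eq0 eqxx in x_neq0.
have [kills_m | not_kills_m] := classic (kills_minors A m x).
  exact: IH (ltnW le_kn) x_neq0 kills_m.
have [f0 /not_all_ex_not [g0 /eqP x_minor]] := not_all_ex_not _ _ not_kills_m.
exact: bordered_minor_annihilator le_kn x_minor kills.
Qed.

End McCoy.

Lemma mx_neq0_entry {R : comNzRingType} {m p} {Y : 'M[R]_(m, p)} :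
  Y != 0 -> exists i j, Y i j != 0.
Proof.
move=> Y_neq0; have : ~~ [forall i, forall j, Y i j == 0].
  apply: contra Y_neq0 => /forallP Y_eq0; apply/eqP/matrixP => i j.
  by rewrite mxE; apply/eqP/(forallP (Y_eq0 i)).
rewrite negb_forall => /existsP [i].
by rewrite negb_forall => /existsP [j]; exists i, j.
Qed.

(* The determinant of a vertex of O(M_n(R)) is a zero-divisor: if A Y = 0
   then \det A * Y = adj(A) A Y = 0. *)
Lemma vertex_det_zero_divisor {R : comNzRingType} {n} {A : 'M[R]_n} :
  overtex A -> exists x, x != 0 /\ \det A * x = 0.
Proof.
case=> _ [[Y [Y_neq0 AY]] _]; have [i [j Yij]] := mx_neq0_entry Y_neq0.
exists (Y i j); split => //.
have := congr1 (fun N => (\adj A *m N) i j) AY.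
by rewrite /= mulmxA mul_adj_mx mul_scalar_mx mulmx0 !mxE.
Qed.

Lemma common_annihilator_zero_divisor {R : comNzRingType}
  (hZ : exists b : R, b != 0 /\ zero_divisor b) {d1 d2 x : R} :
  x != 0 -> d1 * x = 0 -> d2 * x = 0 ->
  exists y b, [/\ y != 0, b != 0, d1 * y = 0, d2 * y = 0 & b * y = 0].
Proof.
move=> x_neq0 d1x d2x.
have [[b [b_neq0 bx]] | x_regular] := classic (exists b, b != 0 /\ b * x = 0).
  by exists x, b.
have x_reg d : d * x = 0 -> d = 0.
  by move=> dx; case: (eqVneq d 0) => // d_neq0; case: x_regular; exists d.
have [b [b_neq0 [c [c_neq0 bc]]]] := hZ.
by exists c, b; rewrite (x_reg _ d1x) (x_reg _ d2x) !mul0r.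
Qed.

Section Walks.
Context {R : comNzRingType} {n : nat}.
Implicit Types X Y Z : 'M[R]_n.

Lemma oadj_sym {X Y} : oadj X Y -> oadj Y X.
Proof. by case=> vX [vY [X_neq_Y [XY YX]]]; do !split => //; rewrite eq_sym. Qed.

Lemma owalk_le_leq {k l X Y} : (k <= l)%N -> owalk_le k X Y -> owalk_le l X Y.
Proof.
elim: l k X => [|l IH] [|k] X //= le_kl.
- by move=> ->; left.
- case=> [-> | [Z [XZ ZY]]]; first by left.
  by right; exists Z; split => //; exact: IH le_kl ZY.
Qed.

Lemma owalk_le_cat {k l X Y Z} :
  owalk_le k X Y -> owalk_le l Y Z -> owalk_le (k + l) X Z.
Proof.
elim: k X => [|k IH] X; first by move=> /= ->.
case=> [-> | [W [XW WY]]] YZ; first exact: owalk_le_leq (leq_addl _ _) YZ.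
by rewrite addSn; right; exists W; split => //; apply: IH WY YZ.
Qed.

Lemma owalk_le_sym {k X Y} : owalk_le k X Y -> owalk_le k Y X.
Proof.
elim: k X => [|k IH] X; first by move=> /= ->.
case=> [-> | [Z [XZ ZY]]]; first by left.
have ZX : owalk_le 1 Z X by right; exists X; split => //; exact: oadj_sym.
by rewrite -addn1; exact: owalk_le_cat (IH _ ZY) ZX.
Qed.

End Walks.

Section ScalarNeighbours.
Context {R : comNzRingType} {n : nat}.
Hypothesis n_gt0 : (0 < n)%N.

Lemma scalar_mx_neq0 (a : R) : a != 0 -> (a%:M : 'M[R]_n) != 0.
Proof.
move=> a_neq0; apply/eqP => /matrixP /(_ (Ordinal n_gt0) (Ordinal n_gt0)).
by rewrite !mxE eqxx mulr1n; apply/eqP.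
Qed.

Lemma scalar_vertex {b x : R} :
  b != 0 -> x != 0 -> b * x = 0 -> overtex (b%:M : 'M[R]_n).
Proof.
move=> b_neq0 x_neq0 bx.
have bxM : b%:M *m x%:M = 0 :> 'M[R]_n by rewrite -scalar_mxM bx raddf0.
have xbM : x%:M *m b%:M = 0 :> 'M[R]_n by rewrite -scalar_mxM mulrC bx raddf0.
split; first exact: scalar_mx_neq0.
by split; exists x%:M; split => //; exact: scalar_mx_neq0.
Qed.

Lemma walk2_to_scalar {A C : 'M[R]_n} {b : R} :
  overtex A -> overtex (b%:M : 'M[R]_n) ->
  C != 0 -> A *m C = 0 -> C *m A = 0 -> b *: C = 0 -> owalk_le 2 A b%:M.
Proof.
move=> vA vB C_neq0 AC CA bC.
have [-> | A_neq_b] := eqVneq A b%:M; first by left.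
have [bA | bA_neq0] := eqVneq (b *: A) 0.
  right; exists b%:M; split; last by left.
  by do !split => //; rewrite ?mul_mx_scalar ?mul_scalar_mx.
have C_neq_A : C != A by apply: contraNneq bA_neq0 => <-; rewrite bC.
have C_neq_b : C != b%:M.
  by apply: contraNneq bA_neq0 => eCb; rewrite -mul_mx_scalar -eCb AC.
have vC : overtex C by split => //; split; exists A; case: vA.
right; exists C; split; first by do !split => //; rewrite eq_sym.
right; exists b%:M; split; last by [].
by do !split => //; rewrite ?mul_mx_scalar ?mul_scalar_mx.
Qed.

Lemma common_scalar_neighbour (hZ : exists b : R, b != 0 /\ zero_divisor b)
  {A1 A2 : 'M[R]_n} {x : R} :
  overtex A1 -> overtex A2 -> x != 0 -> \det A1 * x = 0 -> \det A2 * x = 0 ->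
  exists b, [/\ zero_divisor b, b != 0, overtex (b%:M : 'M[R]_n),
                owalk_le 2 A1 b%:M & owalk_le 2 A2 b%:M].
Proof.
move=> vA1 vA2 x_neq0 det1x det2x.
have [y [b [y_neq0 b_neq0 det1y det2y by0]]] :=
  common_annihilator_zero_divisor hZ x_neq0 det1x det2x.
have vB := scalar_vertex b_neq0 y_neq0 by0.
have walk_to_b (A : 'M[R]_n) : overtex A -> \det A * y = 0 -> owalk_le 2 A b%:M.
  move=> vA detAy.
  have [C [C_neq0 AC CA annC]] :=
    kills_minors_annihilator A (leqnn n) y_neq0 (kills_minors_det detAy).
  exact: walk2_to_scalar vA vB C_neq0 AC CA (annC _ by0).
exists b; split => //; [by exists y | exact: walk_to_b | exact: walk_to_b].
Qed.

End ScalarNeighbours.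

Theorem corollary3 (R : comNzRingType) (n : nat)
  (hZ : exists b : R, b != 0 /\ zero_divisor b) (hn : (1 < n)%N) :
  (forall A : 'M[R]_n, overtex A ->
     exists b : R, zero_divisor b /\ b != 0 /\ overtex (b%:M : 'M[R]_n)
                   /\ odist_le 2 A b%:M)
  /\
  (forall A1 A2 : 'M[R]_n, overtex A1 -> overtex A2 ->
     (exists x : R, x != 0 /\ \det A1 * x = 0 /\ \det A2 * x = 0) ->
     odist_le 4 A1 A2).
Proof.
have n_gt0 : (0 < n)%N := ltnW hn.
split.
  move=> A vA; have [x [x_neq0 detAx]] := vertex_det_zero_divisor vA.
  have [b [zb b_neq0 vB walkA _]] :=
    common_scalar_neighbour n_gt0 hZ vA vA x_neq0 detAx detAx.
  by exists b.
move=> A1 A2 vA1 vA2 [x [x_neq0 [det1x det2x]]].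
have [b [_ _ _ walk1 walk2]] :=
  common_scalar_neighbour n_gt0 hZ vA1 vA2 x_neq0 det1x det2x.
by split => //; split => //; exact: owalk_le_cat walk1 (owalk_le_sym walk2).
Qed.
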